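(* Let $\Gamma$ be a finite index subgroup of $\mathrm{SL}_2(\mathbb{Z})$ and let $f$ be a holomorphic modular form of weight $2$ for $\Gamma$. Define \[ h(\tau)=\int_i^{\tau} f(z)\,dz,\qquad \tau\in\mathfrak{H}. \] Then $h$ is $\rho$-equivariant for $\Gamma$ for some triangular representation $\rho$ of $\Gamma$.
   Context: $\mathfrak{H}$ denotes the complex upper half-plane. A holomorphic modular form of weight $2$ for $\Gamma$ is a holomorphic function $f$ on $\mathfrak{H}$ with $f(\gamma\tau)=(c\tau+d)^2f(\tau)$ for all $\gamma=\begin{pmatrix}a&b\\c&d\end{pmatrix}\in\Gamma$, holomorphic at the cusps. For a matrix $\begin{pmatrix}a&b\\c&d\end{pmatrix}$ and $z\in\mathbb{C}$, write $\begin{pmatrix}a&b\\c&d\end{pmatrix}\cdot z=\frac{az+b}{cz+d}$. Given a representation $\rho:\Gamma\to\mathrm{GL}_2(\mathbb{C})$, a meromorphic function $h$ on $\mathfrak{H}$ is called $\rho$-equivariant for $\Gamma$ if $h(\gamma\tau)=\rho(\gamma)\cdot h(\tau)$ for all $\gamma\in\Gamma$, $\tau\in\mathfrak{H}$ (linear fractional action on both sides). The representation $\rho$ is triangular if every $\rho(\gamma)$ is upper triangular. *)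

From Stdlib Require Import Reals ZArith List.
From Coquelicot Require Import Coquelicot.

Open Scope C_scope.

Definition in_H (z : C) : Prop := (0 < Im z)%R.

(* Integer 2x2 matrices (a,b,c,d) = [[a,b],[c,d]]. *)
Definition Zmat := (Z * Z * Z * Z)%type.
Definition zmA (g : Zmat) : Z := let '(a,_,_,_) := g in a.
Definition zmB (g : Zmat) : Z := let '(_,b,_,_) := g in b.
Definition zmC (g : Zmat) : Z := let '(_,_,c,_) := g in c.
Definition zmD (g : Zmat) : Z := let '(_,_,_,d) := g in d.

Definition in_SL2Z (g : Zmat) : Prop := (zmA g * zmD g - zmB g * zmC g = 1)%Z.

Definition zmul (g h : Zmat) : Zmat :=
  ((zmA g * zmA h + zmB g * zmC h)%Z, (zmA g * zmB h + zmB g * zmD h)%Z,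
   (zmC g * zmA h + zmD g * zmC h)%Z, (zmC g * zmB h + zmD g * zmD h)%Z).
Definition zid : Zmat := (1%Z, 0%Z, 0%Z, 1%Z).
(* inverse of a determinant-one matrix *)
Definition zinv (g : Zmat) : Zmat := (zmD g, (- zmB g)%Z, (- zmC g)%Z, zmA g).

Definition is_subgroup_SL2Z (Gam : Zmat -> Prop) : Prop :=
  (forall g, Gam g -> in_SL2Z g) /\ Gam zid /\
  (forall g h, Gam g -> Gam h -> Gam (zmul g h)) /\
  (forall g, Gam g -> Gam (zinv g)).

Definition finite_index_SL2Z (Gam : Zmat -> Prop) : Prop :=
  exists reps : list Zmat,
    (forall r, In r reps -> in_SL2Z r) /\
    forall g, in_SL2Z g -> exists r, In r reps /\ Gam (zmul g (zinv r)).

Definition zmobius (g : Zmat) (z : C) : C :=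
  (IZR (zmA g) * z + IZR (zmB g)) / (IZR (zmC g) * z + IZR (zmD g)).

Definition jfac (g : Zmat) (z : C) : C := IZR (zmC g) * z + IZR (zmD g).

Definition holo_on (U : C -> Prop) (f : C -> C) : Prop :=
  forall z, U z -> ex_derive f z.

(* complex exponential exp(2 pi i z / N) *)
Definition qpar (N : nat) (z : C) : C :=
  let t := (2 * PI / INR N)%R in
  (exp (- t * Im z) * cos (t * Re z), exp (- t * Im z) * sin (t * Re z))%R.

(* Holomorphic at all cusps (weight 2): for each gamma in SL_2(Z), the slashed
   function (f|_2 gamma)(tau) = (c tau + d)^(-2) f(gamma tau) has a
   q-expansion, i.e. equals g(exp(2 pi i tau/N)) for some N > 0 and some g
   holomorphic on the open unit disc (including q = 0). *)
Definition holo_at_cusps (f : C -> C) : Prop :=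
  forall gam, in_SL2Z gam ->
    exists (N : nat) (g : C -> C),
      (0 < N)%nat /\ holo_on (fun q => (Cmod q < 1)%R) g /\
      forall tau, in_H tau ->
        f (zmobius gam tau) / (jfac gam tau * jfac gam tau) = g (qpar N tau).

Definition modular_form_wt2 (Gam : Zmat -> Prop) (f : C -> C) : Prop :=
  holo_on in_H f /\
  (forall gam tau, Gam gam -> in_H tau ->
     f (zmobius gam tau) = (jfac gam tau) ^ 2 * f tau) /\
  holo_at_cusps f.

Definition Cmat := (C * C * C * C)%type.
Definition cmA (m : Cmat) : C := let '(a,_,_,_) := m in a.
Definition cmB (m : Cmat) : C := let '(_,b,_,_) := m in b.
Definition cmC (m : Cmat) : C := let '(_,_,c,_) := m in c.
Definition cmD (m : Cmat) : C := let '(_,_,_,d) := m in d.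
Definition cmul (m n : Cmat) : Cmat :=
  (cmA m * cmA n + cmB m * cmC n, cmA m * cmB n + cmB m * cmD n,
   cmC m * cmA n + cmD m * cmC n, cmC m * cmB n + cmD m * cmD n).
Definition cdet (m : Cmat) : C := cmA m * cmD m - cmB m * cmC m.

Definition is_rep (Gam : Zmat -> Prop) (rho : Zmat -> Cmat) : Prop :=
  (forall g, Gam g -> cdet (rho g) <> 0) /\
  (forall g h, Gam g -> Gam h -> rho (zmul g h) = cmul (rho g) (rho h)).

Definition is_triangular (Gam : Zmat -> Prop) (rho : Zmat -> Cmat) : Prop :=
  forall g, Gam g -> cmC (rho g) = 0.

Definition cmobius (m : Cmat) (z : C) : C :=
  (cmA m * z + cmB m) / (cmC m * z + cmD m).

Definition equivariant (Gam : Zmat -> Prop) (rho : Zmat -> Cmat) (h : C -> C) : Prop :=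
  forall gam tau, Gam gam -> in_H tau -> h (zmobius gam tau) = cmobius (rho gam) (h tau).

(* h(tau) = int_i^tau f(z) dz, along the straight segment from i to tau
   (H is convex; f holomorphic so the integral is path independent). *)
Definition prim_from_i (f : C -> C) (tau : C) : C :=
  @RInt C_R_CompleteNormedModule
    (fun t : R => f (Ci + RtoC t * (tau - Ci)) * (tau - Ci)) 0%R 1%R.

(* The weight-two law f(g z) = (c z + d)^2 f(z) says that the differential
   f(z) dz is invariant under g, because d(g z) = dz / (c z + d)^2.  Hence
   h o g - h has zero derivative on the upper half-plane and is the constant
   h(g i), as h(i) = 0.  So h(g tau) = h(tau) + h(g i), the map g |-> h(g i) is
   additive, and rho(g) = [[1, h(g i)], [0, 1]] works.  That h' = f is Goursat's
   lemma for triangles in the half-plane.  Neither the finite index of Gamma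
   nor holomorphy at the cusps is needed. *)

From Stdlib Require Import Reals Lra Lia.
From Coquelicot Require Import Coquelicot.
Open Scope R_scope.

(* For identities in C that [ring] and [field] miss, typically because of
   [RtoC] casts: check them componentwise. *)
Ltac ring_C := repeat match goal with z : C |- _ => destruct z end;
  apply injective_projections; simpl; field.

Lemma norm_C_R (z : C) : @norm R_AbsRing C_R_NormedModule z = Cmod z.
Proof.
  destruct z as [x y]; unfold norm; simpl; unfold prod_norm, Cmod; simpl.
  change (norm x) with (Rabs x); change (norm y) with (Rabs y).
  now rewrite !Rmult_1_r, <- !Rsqr_def, <- !Rsqr_abs.
Qed.

Lemma Im_le_Cmod (z : C) : Rabs (Im z) <= Cmod z.
Proof. eapply Rle_trans; [|apply Rmax_Cmod]. apply Rmax_r. Qed.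

Lemma Cmod_le_2max (z : C) : Cmod z <= 2 * Rmax (Rabs (Re z)) (Rabs (Im z)).
Proof.
  eapply Rle_trans; [apply Cmod_2Rmax|]. apply Rmult_le_compat_r.
  - eapply Rle_trans; [apply Rabs_pos|apply Rmax_l].
  - pose proof (sqrt_sqrt 2 ltac:(lra)). pose proof (sqrt_lt_R0 2 ltac:(lra)). nra.
Qed.

Lemma Cmod_sub_sym (z w : C) : Cmod (z - w) = Cmod (w - z).
Proof. replace (z - w)%C with (- (w - z))%C by ring_C. apply Cmod_opp. Qed.

Lemma Cmod_RtoC_mult (t : R) (z : C) : Cmod (RtoC t * z) = Rabs t * Cmod z.
Proof. now rewrite Cmod_mult, Cmod_R. Qed.

Lemma pow_half_lt (y : R) : 0 < y -> exists n, (/2) ^ n < y.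
Proof.
  intros Hy.
  destruct (pow_lt_1_zero (/2) ltac:(rewrite Rabs_pos_eq; lra) y Hy) as [N HN].
  exists N. specialize (HN N (le_n N)).
  rewrite Rabs_pos_eq in HN by (apply pow_le; lra). exact HN.
Qed.

Definition cont_at (f : C -> C) (z : C) : Prop :=
  forall eps, 0 < eps -> exists delta, 0 < delta /\
    forall w, Cmod (w - z) < delta -> Cmod (f w - f z) < eps.

Definition deriv_at (f : C -> C) (z l : C) : Prop :=
  forall eps, 0 < eps -> exists delta, 0 < delta /\
    forall w, Cmod (w - z) < delta ->
      Cmod (f w - f z - (w - z) * l) <= eps * Cmod (w - z).

(* The balls of Coquelicot's uniform structure on C are those of the max norm,
   hence the factor [sqrt 2]. *)
Lemma ex_derive_cont_at (f : C -> C) z : ex_derive f z -> cont_at f z.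
Proof.
  intros Hd eps Heps.
  pose proof (sqrt_lt_R0 2 ltac:(lra)) as Hs.
  assert (He : 0 < eps / sqrt 2) by (apply Rdiv_lt_0_compat; lra).
  destruct (proj1 (filterlim_locally f (f z)) (ex_derive_continuous f z Hd)
              (mkposreal _ He)) as [d Hd'].
  exists d. split; [apply cond_pos|]. intros w Hw.
  specialize (Hd' w Hw). apply C_NormedModule_mixin_compat2 in Hd'. simpl in Hd'.
  replace (sqrt 2 * (eps / sqrt 2)) with eps in Hd' by (field; lra).
  exact Hd'.
Qed.

(* Coquelicot carries two non-convertible normed-module structures on C:
   [C_NormedModule], used by [ex_derive] on [C -> C], and
   [AbsRing_NormedModule C_AbsRing], which [is_derive_comp] demands of the
   inner function. *)
Lemma is_derive_deriv_at (f : C -> C) z l :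
  @is_derive C_AbsRing C_NormedModule f z l -> deriv_at f z l.
Proof.
  intros [_ H] eps Heps.
  destruct (H z (fun P HP => HP) (mkposreal _ Heps)) as [d Hd].
  exists d. split; [apply cond_pos|exact Hd].
Qed.

Lemma deriv_at_is_derive (f : C -> C) z l :
  deriv_at f z l -> @is_derive C_AbsRing C_NormedModule f z l.
Proof.
  intros H. split; [apply is_linear_scal_l|].
  intros x Hx. apply (@is_filter_lim_locally_unique _ (AbsRing_NormedModule _)) in Hx.
  subst x. intros eps. destruct (H eps (cond_pos eps)) as [d [Hd0 Hd]].
  exists (mkposreal _ Hd0). exact Hd.
Qed.

Lemma deriv_at_is_derive_K (f : C -> C) z l :
  deriv_at f z l -> @is_derive C_AbsRing (AbsRing_NormedModule C_AbsRing) f z l.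
Proof.
  intros H. split; [apply is_linear_scal_l|].
  intros x Hx. apply (@is_filter_lim_locally_unique _ (AbsRing_NormedModule _)) in Hx.
  subst x. intros eps. destruct (H eps (cond_pos eps)) as [d [Hd0 Hd]].
  exists (mkposreal _ Hd0). exact Hd.
Qed.

Lemma is_derive_R_C_of_eps (g : R -> C) t (l : C) :
  (forall eps, 0 < eps -> exists delta, 0 < delta /\
    forall s, Rabs (s - t) < delta ->
      Cmod (g s - g t - RtoC (s - t) * l) <= eps * Rabs (s - t)) ->
  @is_derive R_AbsRing C_R_NormedModule g t l.
Proof.
  intros H. split; [apply is_linear_scal_l|].
  intros x Hx. apply (@is_filter_lim_locally_unique _ (AbsRing_NormedModule _)) in Hx.
  subst x. intros eps. destruct (H eps (cond_pos eps)) as [d [Hd0 Hd]].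
  exists (mkposreal _ Hd0). intros y Hy.
  rewrite !norm_C_R, scal_R_Cmult. exact (Hd y Hy).
Qed.

Lemma continuous_R_C_of_eps (g : R -> C) t :
  (forall eps, 0 < eps -> exists delta, 0 < delta /\
    forall s, Rabs (s - t) < delta -> Cmod (g s - g t) < eps) ->
  @continuous R_UniformSpace C_R_NormedModule g t.
Proof.
  intros H. apply (proj2 (filterlim_locally g (g t))).
  intros eps. destruct (H eps (cond_pos eps)) as [d [Hd0 Hd]].
  exists (mkposreal _ Hd0). intros y Hy.
  apply (@norm_compat1 _ C_R_NormedModule). rewrite norm_C_R. exact (Hd y Hy).
Qed.

Definition cont_on_H (f : C -> C) : Prop := forall z, 0 < Im z -> cont_at f z.

Definition seg_int (f : C -> C) (p q : C) : C :=
  @RInt C_R_CompleteNormedModule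
    (fun t : R => (f (p + RtoC t * (q - p)) * (q - p))%C) 0 1.

Definition tri_int (f : C -> C) (a b c : C) : C :=
  (seg_int f a b + seg_int f b c + seg_int f c a)%C.

Definition mid (p q : C) : C := (RtoC (/2) * (p + q))%C.

Lemma Im_mid p q : Im (mid p q) = (Im p + Im q) / 2.
Proof. destruct p, q; unfold mid; simpl; field. Qed.

Lemma seg_point_in_H p q t : 0 < Im p -> 0 < Im q -> 0 <= t <= 1 ->
  0 < Im (p + RtoC t * (q - p))%C.
Proof.
  intros Hp Hq Ht.
  replace (Im (p + RtoC t * (q - p))%C) with ((1 - t) * Im p + t * Im q)
    by (destruct p, q; simpl; ring).
  nra.
Qed.

Lemma cont_on_H_ex_derive f :
  (forall z, 0 < Im z -> ex_derive f z) -> cont_on_H f.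
Proof. intros H z Hz. exact (ex_derive_cont_at f z (H z Hz)). Qed.

Lemma cont_on_H_affine (al be : C) : cont_on_H (fun z => al + be * z)%C.
Proof.
  intros z _ eps Heps. pose proof (Cmod_ge_0 be).
  exists (eps / (Cmod be + 1)). split; [apply Rdiv_lt_0_compat; lra|].
  intros w Hw.
  replace (al + be * w - (al + be * z))%C with (be * (w - z))%C by ring_C.
  rewrite Cmod_mult. pose proof (Cmod_ge_0 (w - z)).
  apply Rmult_lt_compat_r with (r := Cmod be + 1) in Hw; [|lra].
  replace (eps / (Cmod be + 1) * (Cmod be + 1)) with eps in Hw by (field; lra).
  nra.
Qed.

Lemma cont_on_H_minus f g : cont_on_H f -> cont_on_H g ->
  cont_on_H (fun z => f z - g z)%C.
Proof.
  intros Hf Hg z Hz eps Heps.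
  destruct (Hf z Hz (eps / 2)) as [d1 [Hd1 H1]]; [lra|].
  destruct (Hg z Hz (eps / 2)) as [d2 [Hd2 H2]]; [lra|].
  exists (Rmin d1 d2). split; [apply Rmin_pos; lra|]. intros w Hw.
  replace (f w - g w - (f z - g z))%C with ((f w - f z) + - (g w - g z))%C
    by (set (a1 := f w); set (a2 := f z); set (a3 := g w); set (a4 := g z); ring_C).
  eapply Rle_lt_trans; [apply Cmod_triangle|]. rewrite Cmod_opp.
  specialize (H1 w (Rlt_le_trans _ _ _ Hw (Rmin_l _ _))).
  specialize (H2 w (Rlt_le_trans _ _ _ Hw (Rmin_r _ _))). lra.
Qed.

Section SegmentIntegrals.

Variable f : C -> C.
Hypothesis f_cont : cont_on_H f.

Lemma seg_integrand_continuous p q t : 0 < Im (p + RtoC t * (q - p))%C ->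
  @continuous R_UniformSpace C_R_NormedModule
    (fun s : R => (f (p + RtoC s * (q - p)) * (q - p))%C) t.
Proof.
  intros Ht. apply continuous_R_C_of_eps. intros eps Heps.
  set (d := (q - p)%C). fold d in Ht |- *. pose proof (Cmod_ge_0 d).
  assert (He : 0 < eps / (Cmod d + 1)) by (apply Rdiv_lt_0_compat; lra).
  destruct (f_cont _ Ht _ He) as [del [Hdel Hf]].
  exists (del / (Cmod d + 1)). split; [apply Rdiv_lt_0_compat; lra|]. intros s Hs.
  replace (f (p + RtoC s * d)%C * d - f (p + RtoC t * d)%C * d)%C
    with ((f (p + RtoC s * d)%C - f (p + RtoC t * d)%C) * d)%C
    by (set (u := f _); set (v := f _); ring_C).
  rewrite Cmod_mult.
  assert (Hlt : Cmod (f (p + RtoC s * d)%C - f (p + RtoC t * d)%C) < eps / (Cmod d + 1)).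
  { apply Hf.
    replace (p + RtoC s * d - (p + RtoC t * d))%C with (RtoC (s - t) * d)%C by ring_C.
    rewrite Cmod_RtoC_mult. pose proof (Rabs_pos (s - t)).
    apply Rmult_lt_compat_r with (r := Cmod d + 1) in Hs; [|lra].
    replace (del / (Cmod d + 1) * (Cmod d + 1)) with del in Hs by (field; lra).
    nra. }
  apply Rle_lt_trans with (eps / (Cmod d + 1) * Cmod d); [apply Rmult_le_compat_r; lra|].
  apply Rlt_le_trans with (eps / (Cmod d + 1) * (Cmod d + 1)); [apply Rmult_lt_compat_l; lra|].
  right; field; lra.
Qed.

Lemma ex_RInt_seg_integrand p q a b : 0 < Im p -> 0 < Im q ->
  0 <= a <= 1 -> 0 <= b <= 1 ->
  @ex_RInt C_R_NormedModule (fun s : R => (f (p + RtoC s * (q - p)) * (q - p))%C) a b.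
Proof.
  intros Hp Hq Ha Hb. apply (@ex_RInt_continuous C_R_CompleteNormedModule).
  intros z Hz. apply seg_integrand_continuous, seg_point_in_H; auto.
  split.
  - apply Rle_trans with (Rmin a b); [apply Rmin_glb; lra|apply Hz].
  - apply Rle_trans with (Rmax a b); [apply Hz|apply Rmax_lub; lra].
Qed.

Lemma seg_int_mid p q : 0 < Im p -> 0 < Im q ->
  seg_int f p q = (seg_int f p (mid p q) + seg_int f (mid p q) q)%C.
Proof.
  intros Hp Hq.
  set (phi := fun s : R => (f (p + RtoC s * (q - p))%C * (q - p))%C).
  assert (E1 : seg_int f p (mid p q) = @RInt C_R_CompleteNormedModule phi 0 (/2)).
  { unfold seg_int.
    rewrite (@RInt_ext C_R_CompleteNormedModule _ (fun y => scal (/2) (phi (/2 * y + 0)))).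
    - rewrite (@RInt_comp_lin C_R_CompleteNormedModule); [f_equal; ring|].
      apply ex_RInt_seg_integrand; auto; lra.
    - intros x _. rewrite scal_R_Cmult. unfold phi.
      replace (p + RtoC x * (mid p q - p))%C with (p + RtoC (/ 2 * x + 0) * (q - p))%C
        by (unfold mid; ring_C).
      set (u := f _). unfold mid; ring_C. }
  assert (E2 : seg_int f (mid p q) q = @RInt C_R_CompleteNormedModule phi (/2) 1).
  { unfold seg_int.
    rewrite (@RInt_ext C_R_CompleteNormedModule _ (fun y => scal (/2) (phi (/2 * y + /2)))).
    - rewrite (@RInt_comp_lin C_R_CompleteNormedModule); [f_equal; field|].
      apply ex_RInt_seg_integrand; auto; lra.
    - intros x _. rewrite scal_R_Cmult. unfold phi.
      replace (mid p q + RtoC x * (q - mid p q))%C with (p + RtoC (/ 2 * x + /2) * (q - p))%C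
        by (unfold mid; ring_C).
      set (u := f _). unfold mid; ring_C. }
  rewrite E1, E2. symmetry.
  apply (@RInt_Chasles C_R_CompleteNormedModule); apply ex_RInt_seg_integrand; auto; lra.
Qed.

Lemma seg_int_swap p q : 0 < Im p -> 0 < Im q -> seg_int f q p = (- seg_int f p q)%C.
Proof.
  intros Hp Hq.
  set (phi := fun s : R => (f (p + RtoC s * (q - p))%C * (q - p))%C).
  unfold seg_int.
  rewrite (@RInt_ext C_R_CompleteNormedModule _ (fun y => scal (-1) (phi (-1 * y + 1)))).
  - rewrite (@RInt_comp_lin C_R_CompleteNormedModule).
    + replace (-1 * 0 + 1) with 1 by ring. replace (-1 * 1 + 1) with 0 by ring.
      rewrite <- (@opp_RInt_swap C_R_CompleteNormedModule); [reflexivity|].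
      apply ex_RInt_seg_integrand; auto; lra.
    + replace (-1 * 0 + 1) with 1 by ring. replace (-1 * 1 + 1) with 0 by ring.
      apply ex_RInt_seg_integrand; auto; lra.
  - intros x _. rewrite scal_R_Cmult. unfold phi.
    replace (q + RtoC x * (p - q))%C with (p + RtoC (-1 * x + 1) * (q - p))%C by ring_C.
    set (u := f _). ring_C.
Qed.

Lemma tri_int_subdiv a b c : 0 < Im a -> 0 < Im b -> 0 < Im c ->
  tri_int f a b c =
  (tri_int f a (mid a b) (mid c a) + tri_int f (mid a b) b (mid b c)
   + tri_int f (mid c a) (mid b c) c + tri_int f (mid a b) (mid b c) (mid c a))%C.
Proof.
  intros Ha Hb Hc.
  assert (0 < Im (mid a b)) by (rewrite Im_mid; lra).
  assert (0 < Im (mid b c)) by (rewrite Im_mid; lra).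
  assert (0 < Im (mid c a)) by (rewrite Im_mid; lra).
  unfold tri_int.
  rewrite (seg_int_mid a b), (seg_int_mid b c), (seg_int_mid c a) by auto.
  rewrite (seg_int_swap (mid a b) (mid c a)), (seg_int_swap (mid b c) (mid a b)),
    (seg_int_swap (mid c a) (mid b c)) by auto.
  ring.
Qed.

Lemma Cmod_seg_int_le p q M : 0 < Im p -> 0 < Im q ->
  (forall t, 0 <= t <= 1 -> Cmod (f (p + RtoC t * (q - p))%C) <= M) ->
  Cmod (seg_int f p q) <= Cmod (q - p) * M.
Proof.
  intros Hp Hq HM. unfold seg_int. rewrite <- norm_C_R.
  apply Rle_trans with ((1 - 0) * (M * Cmod (q - p))); [|right; ring].
  apply (@norm_RInt_le_const C_R_NormedModule
           (fun t : R => (f (p + RtoC t * (q - p))%C * (q - p))%C) 0 1); [lra| |].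
  - intros x Hx. rewrite norm_C_R, Cmod_mult.
    apply Rmult_le_compat_r; [apply Cmod_ge_0|apply HM; lra].
  - apply (@RInt_correct C_R_CompleteNormedModule), ex_RInt_seg_integrand; auto; lra.
Qed.

End SegmentIntegrals.

Lemma seg_int_minus f g p q : cont_on_H f -> cont_on_H g -> 0 < Im p -> 0 < Im q ->
  seg_int (fun z => f z - g z)%C p q = (seg_int f p q - seg_int g p q)%C.
Proof.
  intros Hf Hg Hp Hq. unfold seg_int.
  set (F := fun t : R => (f (p + RtoC t * (q - p))%C * (q - p))%C).
  set (G := fun t : R => (g (p + RtoC t * (q - p))%C * (q - p))%C).
  transitivity (@RInt C_R_CompleteNormedModule (fun x => @minus C_R_NormedModule (F x) (G x)) 0 1).
  - apply (@RInt_ext C_R_CompleteNormedModule). intros x _.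
    change (@minus C_R_NormedModule (F x) (G x)) with (Cminus (F x) (G x)).
    unfold F, G. set (u := f _). set (v := g _). ring_C.
  - apply (@RInt_minus C_R_CompleteNormedModule); apply ex_RInt_seg_integrand; auto; lra.
Qed.

Lemma seg_int_affine (al be : C) p q :
  seg_int (fun z => al + be * z)%C p q =
  ((al + be * p) * (q - p) + be * (q - p) * (q - p) * RtoC (/2))%C.
Proof.
  set (A := ((al + be * p) * (q - p))%C). set (B := (be * (q - p) * (q - p))%C).
  pose proof (Cmod_ge_0 B).
  unfold seg_int.
  rewrite (@RInt_ext C_R_CompleteNormedModule _ (fun t => A + RtoC t * B)%C)
    by (intros x _; unfold A, B; ring_C).
  apply (@is_RInt_unique C_R_CompleteNormedModule).
  set (Psi := fun t : R => (RtoC t * A + RtoC (t * t / 2) * B)%C).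
  replace (A + B * RtoC (/2))%C with (Psi 1 - Psi 0)%C by (unfold Psi; ring_C).
  apply (@is_RInt_derive C_R_CompleteNormedModule Psi).
  - intros x _. apply is_derive_R_C_of_eps. intros eps Heps.
    exists (eps / (Cmod B + 1)). split; [apply Rdiv_lt_0_compat; lra|]. intros s Hs.
    unfold Psi.
    replace (RtoC s * A + RtoC (s * s / 2) * B - (RtoC x * A + RtoC (x * x / 2) * B) -
        RtoC (s - x) * (A + RtoC x * B))%C
      with (RtoC (Rabs (s - x) * Rabs (s - x) / 2) * B)%C
      by (rewrite <- Rabs_mult, Rabs_pos_eq by apply Rle_0_sqr; ring_C).
    rewrite Cmod_RtoC_mult, Rabs_pos_eq by (pose proof (Rabs_pos (s - x)); nra).
    pose proof (Rabs_pos (s - x)).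
    apply Rmult_lt_compat_r with (r := Cmod B + 1) in Hs; [|lra].
    replace (eps / (Cmod B + 1) * (Cmod B + 1)) with eps in Hs by (field; lra).
    nra.
  - intros x _. apply continuous_R_C_of_eps. intros eps Heps.
    exists (eps / (Cmod B + 1)). split; [apply Rdiv_lt_0_compat; lra|]. intros s Hs.
    replace (A + RtoC s * B - (A + RtoC x * B))%C with (RtoC (s - x) * B)%C by ring_C.
    rewrite Cmod_RtoC_mult. pose proof (Rabs_pos (s - x)).
    apply Rmult_lt_compat_r with (r := Cmod B + 1) in Hs; [|lra].
    replace (eps / (Cmod B + 1) * (Cmod B + 1)) with eps in Hs by (field; lra).
    nra.
Qed.

Lemma tri_int_affine al be a b c : tri_int (fun z => al + be * z)%C a b c = 0%C.
Proof. unfold tri_int. rewrite !seg_int_affine. ring_C. Qed.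

(** * Goursat's lemma in the upper half-plane *)

Lemma geometric_cauchy_R (x : nat -> R) K : 0 <= K ->
  (forall n, Rabs (x (S n) - x n) <= K * (/2) ^ n) ->
  exists l, forall n, Rabs (x n - l) <= 2 * K * (/2) ^ n.
Proof.
  intros HK H.
  assert (Hpow : forall n, 0 < (/2) ^ n) by (intros; apply pow_lt; lra).
  set (u := fun n => x n - 2 * K * (/2) ^ n).
  set (v := fun n => x n + 2 * K * (/2) ^ n).
  assert (Hu : Un_growing u).
  { intros n. unfold u. simpl. specialize (H n). apply Rabs_le_between in H.
    pose proof (Hpow n). nra. }
  assert (Hv : Un_decreasing v).
  { intros n. unfold v. simpl. specialize (H n). apply Rabs_le_between in H.
    pose proof (Hpow n). nra. }
  assert (Huv : forall m n, u m <= v n).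
  { intros m n. destruct (Nat.le_gt_cases m n) as [Hmn|Hmn].
    - apply Rle_trans with (u n); [apply Rge_le, growing_prop; auto|].
      unfold u, v. pose proof (Hpow n). nra.
    - apply Rle_trans with (v m); [unfold u, v; pose proof (Hpow m); nra|].
      apply decreasing_prop; auto. lia. }
  set (E := fun y => exists n, y = u n).
  assert (HE : bound E) by (exists (v 0%nat); intros y [n ->]; apply Huv).
  destruct (completeness E HE) as [l [Hl1 Hl2]]; [exists (u 0%nat), 0%nat; reflexivity|].
  exists l. intros n.
  assert (u n <= l) by (apply Hl1; exists n; reflexivity).
  assert (l <= v n) by (apply Hl2; intros y [m ->]; apply Huv).
  unfold u, v in *. apply Rabs_le. lra.
Qed.

Lemma geometric_cauchy_C (x : nat -> C) K : 0 <= K ->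
  (forall n, Cmod (x (S n) - x n) <= K * (/2) ^ n) ->
  exists l, forall n, Cmod (x n - l) <= 4 * K * (/2) ^ n.
Proof.
  intros HK H.
  destruct (geometric_cauchy_R (fun n => Re (x n)) K HK) as [lr Hlr].
  { intros n. eapply Rle_trans; [|apply H].
    replace (Re (x (S n)) - Re (x n)) with (Re (x (S n) - x n)) by (destruct (x (S n)), (x n); simpl; ring).
    apply re_le_Cmod. }
  destruct (geometric_cauchy_R (fun n => Im (x n)) K HK) as [li Hli].
  { intros n. eapply Rle_trans; [|apply H].
    replace (Im (x (S n)) - Im (x n)) with (Im (x (S n) - x n)) by (destruct (x (S n)), (x n); simpl; ring).
    apply Im_le_Cmod. }
  exists (lr, li). intros n. eapply Rle_trans; [apply Cmod_le_2max|].
  replace (Re (x n - (lr, li))%C) with (Re (x n) - lr) by (destruct (x n); simpl; ring).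
  replace (Im (x n - (lr, li))%C) with (Im (x n) - li) by (destruct (x n); simpl; ring).
  specialize (Hlr n). specialize (Hli n). simpl in Hlr, Hli.
  apply Rmax_case_strong; intros _; lra.
Qed.

Definition triangle : Type := (C * C * C)%type.

Definition tri_int_t (f : C -> C) (t : triangle) : C :=
  let '(a, b, c) := t in tri_int f a b c.
Definition apex (t : triangle) : C := let '(a, _, _) := t in a.
Definition perimeter (t : triangle) : R :=
  let '(a, b, c) := t in Cmod (b - a) + Cmod (c - b) + Cmod (a - c).
Definition Im_ge (m : R) (t : triangle) : Prop :=
  let '(a, b, c) := t in m <= Im a /\ m <= Im b /\ m <= Im c.

Definition subtri1 (t : triangle) : triangle :=
  let '(a, b, c) := t in (a, mid a b, mid c a).
Definition subtri2 (t : triangle) : triangle :=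
  let '(a, b, c) := t in (mid a b, b, mid b c).
Definition subtri3 (t : triangle) : triangle :=
  let '(a, b, c) := t in (mid c a, mid b c, c).
Definition subtri4 (t : triangle) : triangle :=
  let '(a, b, c) := t in (mid a b, mid b c, mid c a).

Definition goursat_step (f : C -> C) (t : triangle) : triangle :=
  if Rle_dec (Cmod (tri_int_t f t) / 4) (Cmod (tri_int_t f (subtri1 t))) then subtri1 t else
  if Rle_dec (Cmod (tri_int_t f t) / 4) (Cmod (tri_int_t f (subtri2 t))) then subtri2 t else
  if Rle_dec (Cmod (tri_int_t f t) / 4) (Cmod (tri_int_t f (subtri3 t))) then subtri3 t else
  subtri4 t.

Definition goursat_seq (f : C -> C) (t : triangle) (n : nat) : triangle :=
  Nat.iter n (goursat_step f) t.

Lemma goursat_step_cases f t :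
  goursat_step f t = subtri1 t \/ goursat_step f t = subtri2 t \/
  goursat_step f t = subtri3 t \/ goursat_step f t = subtri4 t.
Proof. unfold goursat_step. repeat destruct Rle_dec; tauto. Qed.

Lemma Cmod_half_mult (r : R) x y : x = (RtoC r * y)%C -> Rabs r = /2 -> Cmod x = /2 * Cmod y.
Proof. intros -> Hr. now rewrite Cmod_RtoC_mult, Hr. Qed.

Lemma Im_ge_goursat_step f m t : Im_ge m t -> Im_ge m (goursat_step f t).
Proof.
  destruct t as [[a b] c]. intros [Ha [Hb Hc]].
  destruct (goursat_step_cases f (a, b, c)) as [E|[E|[E|E]]]; rewrite E;
    unfold Im_ge, subtri1, subtri2, subtri3, subtri4; cbv beta iota; rewrite ?Im_mid; repeat split; lra.
Qed.

Lemma perimeter_goursat_step f t : perimeter (goursat_step f t) = perimeter t / 2.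
Proof.
  destruct t as [[a b] c].
  assert (Hh : Rabs (/2) = /2) by (apply Rabs_pos_eq; lra).
  assert (Hh' : Rabs (- /2) = /2) by (rewrite Rabs_Ropp; exact Hh).
  destruct (goursat_step_cases f (a, b, c)) as [E|[E|[E|E]]]; rewrite E;
    unfold perimeter, subtri1, subtri2, subtri3, subtri4; cbv beta iota.
  - rewrite (Cmod_half_mult (/2) (mid a b - a) (b - a)), (Cmod_half_mult (/2) (mid c a - mid a b) (c - b)),
      (Cmod_half_mult (/2) (a - mid c a) (a - c)); auto; try (unfold mid; ring_C). field.
  - rewrite (Cmod_half_mult (/2) (b - mid a b) (b - a)), (Cmod_half_mult (/2) (mid b c - b) (c - b)),
      (Cmod_half_mult (/2) (mid a b - mid b c) (a - c)); auto; try (unfold mid; ring_C). field.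
  - rewrite (Cmod_half_mult (/2) (mid b c - mid c a) (b - a)), (Cmod_half_mult (/2) (c - mid b c) (c - b)),
      (Cmod_half_mult (/2) (mid c a - c) (a - c)); auto; try (unfold mid; ring_C). field.
  - rewrite (Cmod_half_mult (- /2) (mid b c - mid a b) (a - c)),
      (Cmod_half_mult (- /2) (mid c a - mid b c) (b - a)),
      (Cmod_half_mult (- /2) (mid a b - mid c a) (c - b)); auto; try (unfold mid; ring_C). field.
Qed.

Lemma apex_goursat_step f t : Cmod (apex (goursat_step f t) - apex t) <= perimeter t.
Proof.
  destruct t as [[a b] c].
  assert (Hh : Rabs (/2) = /2) by (apply Rabs_pos_eq; lra).
  pose proof (Cmod_ge_0 (b - a)). pose proof (Cmod_ge_0 (c - b)). pose proof (Cmod_ge_0 (a - c)).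
  destruct (goursat_step_cases f (a, b, c)) as [E|[E|[E|E]]]; rewrite E;
    unfold perimeter, apex, subtri1, subtri2, subtri3, subtri4; cbv beta iota.
  - replace (a - a)%C with (RtoC 0) by ring_C. rewrite Cmod_0. lra.
  - rewrite (Cmod_half_mult (/2) (mid a b - a) (b - a)); auto; [lra|unfold mid; ring_C].
  - rewrite (Cmod_half_mult (/2) (mid c a - a) (c - a)), Cmod_sub_sym; auto; [lra|unfold mid; ring_C].
  - rewrite (Cmod_half_mult (/2) (mid a b - a) (b - a)); auto; [lra|unfold mid; ring_C].
Qed.

Lemma Cmod_tri_int_goursat_step f m t : cont_on_H f -> 0 < m -> Im_ge m t ->
  Cmod (tri_int_t f t) / 4 <= Cmod (tri_int_t f (goursat_step f t)).
Proof.
  intros Hf Hm Ht. unfold goursat_step.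
  destruct Rle_dec as [H1|H1]; [exact H1|].
  destruct Rle_dec as [H2|H2]; [exact H2|].
  destruct Rle_dec as [H3|H3]; [exact H3|].
  apply Rnot_le_lt in H1, H2, H3.
  assert (E : tri_int_t f t = (tri_int_t f (subtri1 t) + tri_int_t f (subtri2 t)
                + tri_int_t f (subtri3 t) + tri_int_t f (subtri4 t))%C).
  { destruct t as [[a b] c]. destruct Ht as [Ha [Hb Hc]].
    apply tri_int_subdiv; auto; lra. }
  pose proof (Cmod_triangle (tri_int_t f (subtri1 t) + tri_int_t f (subtri2 t)
                             + tri_int_t f (subtri3 t)) (tri_int_t f (subtri4 t))).
  pose proof (Cmod_triangle (tri_int_t f (subtri1 t) + tri_int_t f (subtri2 t))
                            (tri_int_t f (subtri3 t))).
  pose proof (Cmod_triangle (tri_int_t f (subtri1 t)) (tri_int_t f (subtri2 t))).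
  rewrite <- E in *. lra.
Qed.

Lemma perimeter_nonneg t : 0 <= perimeter t.
Proof.
  destruct t as [[a b] c]; simpl.
  pose proof (Cmod_ge_0 (b - a)). pose proof (Cmod_ge_0 (c - b)). pose proof (Cmod_ge_0 (a - c)).
  lra.
Qed.

Section GoursatSequence.

Variables (f : C -> C) (t : triangle).

Lemma Im_ge_goursat_seq m n : Im_ge m t -> Im_ge m (goursat_seq f t n).
Proof. intros Ht. induction n; [exact Ht|apply Im_ge_goursat_step, IHn]. Qed.

Lemma perimeter_goursat_seq n : perimeter (goursat_seq f t n) = perimeter t * (/2) ^ n.
Proof.
  induction n; simpl; [ring|].
  change (perimeter (goursat_step f (goursat_seq f t n)) = perimeter t * (/ 2 * (/ 2) ^ n)).
  rewrite perimeter_goursat_step, IHn. field.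
Qed.

Lemma Cmod_tri_int_goursat_seq m n : cont_on_H f -> 0 < m -> Im_ge m t ->
  Cmod (tri_int_t f t) * ((/2) ^ n * (/2) ^ n) <= Cmod (tri_int_t f (goursat_seq f t n)).
Proof.
  intros Hf Hm Ht. induction n; [simpl; lra|].
  change (goursat_seq f t (S n)) with (goursat_step f (goursat_seq f t n)).
  eapply Rle_trans; [|apply (Cmod_tri_int_goursat_step f m); auto using Im_ge_goursat_seq].
  change ((/2) ^ S n) with (/2 * (/2) ^ n).
  replace (Cmod (tri_int_t f t) * (/ 2 * (/ 2) ^ n * (/ 2 * (/ 2) ^ n)))
    with (Cmod (tri_int_t f t) * ((/2) ^ n * (/2) ^ n) / 4) by field.
  lra.
Qed.

Lemma goursat_seq_limit m : Im_ge m t ->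
  exists z0, m <= Im z0 /\
    forall n, Cmod (apex (goursat_seq f t n) - z0) <= 4 * perimeter t * (/2) ^ n.
Proof.
  intros Ht.
  destruct (geometric_cauchy_C (fun n => apex (goursat_seq f t n)) (perimeter t)
              (perimeter_nonneg t)) as [z0 Hz0].
  { intros n. rewrite <- perimeter_goursat_seq. apply apex_goursat_step. }
  exists z0. split; [|exact Hz0].
  apply Rle_plus_epsilon. intros eps Heps.
  destruct (pow_half_lt (eps / (4 * perimeter t + 1))) as [n Hn].
  { pose proof (perimeter_nonneg t). apply Rdiv_lt_0_compat; lra. }
  specialize (Hz0 n). pose proof (Im_le_Cmod (apex (goursat_seq f t n) - z0)) as HIm.
  assert (Hm : m <= Im (apex (goursat_seq f t n))).
  { pose proof (Im_ge_goursat_seq m n Ht) as Hn'.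
    destruct (goursat_seq f t n) as [[a b] c]. apply Hn'. }
  replace (Im (apex (goursat_seq f t n) - z0)%C) with (Im (apex (goursat_seq f t n)) - Im z0)
    in HIm by (destruct (apex (goursat_seq f t n)), z0; simpl; ring).
  apply Rabs_le_between in HIm.
  pose proof (perimeter_nonneg t). pose proof (pow_lt (/2) n ltac:(lra)).
  apply Rmult_lt_compat_l with (r := 4 * perimeter t + 1) in Hn; [|lra].
  replace ((4 * perimeter t + 1) * (eps / (4 * perimeter t + 1))) with eps in Hn by (field; lra).
  nra.
Qed.

End GoursatSequence.

Lemma tri_int_minus f g a b c : cont_on_H f -> cont_on_H g ->
  0 < Im a -> 0 < Im b -> 0 < Im c ->
  tri_int (fun z => f z - g z)%C a b c = (tri_int f a b c - tri_int g a b c)%C.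
Proof. intros. unfold tri_int. rewrite !seg_int_minus by auto. ring. Qed.

Lemma tri_int_sub_affine f al be a b c : cont_on_H f -> 0 < Im a -> 0 < Im b -> 0 < Im c ->
  tri_int (fun z => f z - (al + be * z))%C a b c = tri_int f a b c.
Proof.
  intros. rewrite tri_int_minus, tri_int_affine by auto using cont_on_H_affine. ring.
Qed.

Lemma tri_int_near_deriv f z0 l : cont_on_H f -> deriv_at f z0 l ->
  forall eps, 0 < eps -> exists delta, 0 < delta /\
  forall a b c s, 0 < Im a -> 0 < Im b -> 0 < Im c ->
    perimeter (a, b, c) <= s -> Cmod (a - z0) <= 4 * s -> 6 * s < delta ->
    Cmod (tri_int f a b c) <= 6 * eps * (s * s).
Proof.
  intros Hf Hl eps Heps. destruct (Hl eps Heps) as [del [Hdel Hde]].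
  exists del. split; [exact Hdel|]. intros a b c s Ha Hb Hc Hper Ha0 Hs. simpl in Hper.
  pose proof (Cmod_ge_0 (b - a)). pose proof (Cmod_ge_0 (c - b)). pose proof (Cmod_ge_0 (a - c)).
  set (g := fun z => (f z - ((f z0 - l * z0) + l * z))%C).
  rewrite <- (tri_int_sub_affine f (f z0 - l * z0) l a b c) by auto. fold g.
  assert (Hseg : forall u v, 0 < Im u -> 0 < Im v -> Cmod (u - a) <= s -> Cmod (v - u) <= s ->
            Cmod (seg_int g u v) <= Cmod (v - u) * (eps * (6 * s))).
  { intros u v Hu Hv Hua Hvu.
    apply Cmod_seg_int_le; auto; [apply cont_on_H_minus; auto using cont_on_H_affine|].
    intros r Hr. set (pt := (u + RtoC r * (v - u))%C).
    assert (Hpt : Cmod (pt - z0) <= 6 * s).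
    { replace (pt - z0)%C with ((u - a) + RtoC r * (v - u) + (a - z0))%C by (unfold pt; ring_C).
      pose proof (Cmod_triangle (u - a + RtoC r * (v - u)) (a - z0)).
      pose proof (Cmod_triangle (u - a) (RtoC r * (v - u))).
      rewrite Cmod_RtoC_mult, Rabs_pos_eq in * by lra.
      pose proof (Cmod_ge_0 (v - u)). nra. }
    replace (g pt) with (f pt - f z0 - (pt - z0) * l)%C
      by (unfold g; set (k1 := f pt); set (k2 := f z0); ring_C).
    eapply Rle_trans; [apply Hde; lra|]. apply Rmult_le_compat_l; lra. }
  assert (Haa : Cmod (a - a) <= s)
    by (replace (a - a)%C with (RtoC 0) by ring_C; rewrite Cmod_0; lra).
  pose proof (Hseg a b Ha Hb Haa ltac:(lra)).
  pose proof (Hseg b c Hb Hc ltac:(lra) ltac:(lra)).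
  pose proof (Hseg c a Hc Ha ltac:(rewrite Cmod_sub_sym; lra) ltac:(lra)).
  unfold tri_int. eapply Rle_trans; [apply Cmod_triangle|].
  eapply Rle_trans; [apply Rplus_le_compat_r, Cmod_triangle|].
  assert (0 <= eps * (6 * s)) by nra.
  nra.
Qed.

Section HolomorphicOnH.

Variable f : C -> C.
Hypothesis f_holo : forall z, 0 < Im z -> ex_derive f z.

Let f_cont : cont_on_H f := cont_on_H_ex_derive f f_holo.

(* Subdividing repeatedly shrinks the triangles by 1/2 and their integrals by at
   most 1/4, while near the limit point f differs from its tangent map, whose
   integral vanishes, by o(|z - z0|). *)
Theorem goursat a b c : 0 < Im a -> 0 < Im b -> 0 < Im c -> tri_int f a b c = 0%C.
Proof.
  intros Ha Hb Hc.
  set (t := (a, b, c) : triangle).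
  pose proof (perimeter_nonneg t) as HP. set (P := perimeter t) in *.
  set (m := Rmin (Im a) (Rmin (Im b) (Im c))).
  assert (Hm : 0 < m) by (unfold m; repeat apply Rmin_pos; auto).
  assert (Ht : Im_ge m t).
  { unfold m. simpl. repeat split; [apply Rmin_l| |];
      (eapply Rle_trans; [apply Rmin_r|]); [apply Rmin_l|apply Rmin_r]. }
  destruct (goursat_seq_limit f t m Ht) as [z0 [Hz0m Hz0]].
  destruct (f_holo z0 ltac:(lra)) as [l Hl].
  change (tri_int f a b c) with (tri_int_t f t).
  apply Cmod_eq_0, Rle_antisym; [|apply Cmod_ge_0].
  apply Rle_plus_epsilon. intros e He. rewrite Rplus_0_l.
  set (eps := e / (6 * (P * P) + 1)).
  assert (Heps : 0 < eps) by (apply Rdiv_lt_0_compat; nra).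
  destruct (tri_int_near_deriv f z0 l f_cont (is_derive_deriv_at f z0 l Hl) eps Heps)
    as [del [Hdel Hnear]].
  destruct (pow_half_lt (del / (6 * (P + 1)))) as [n Hn]; [apply Rdiv_lt_0_compat; lra|].
  set (r := (/2) ^ n) in *. assert (Hr : 0 < r) by (apply pow_lt; lra).
  pose proof (Cmod_tri_int_goursat_seq f t m n f_cont Hm Ht) as Hlow. fold r in Hlow.
  assert (Hup : Cmod (tri_int_t f (goursat_seq f t n)) <= 6 * eps * ((P * r) * (P * r))).
  { pose proof (Im_ge_goursat_seq f t m n Ht) as Hmn.
    pose proof (perimeter_goursat_seq f t n) as Hper.
    pose proof (Hz0 n) as Hapex. fold P r in Hper, Hapex.
    assert (6 * (P * r) < del).
    { apply Rmult_lt_compat_l with (r := 6 * (P + 1)) in Hn; [|lra].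
      replace (6 * (P + 1) * (del / (6 * (P + 1)))) with del in Hn by (field; lra). nra. }
    destruct (goursat_seq f t n) as [[x y] w]. destruct Hmn as [Hx [Hy Hw]].
    apply Hnear; simpl in *; lra. }
  assert (Hbound : Cmod (tri_int_t f t) <= 6 * eps * (P * P))
    by (apply Rmult_le_reg_r with (r * r); nra).
  assert (eps * (6 * (P * P) + 1) = e) by (unfold eps; field; nra).
  nra.
Qed.

Lemma prim_from_i_sub tau w : 0 < Im tau -> 0 < Im w ->
  (prim_from_i f w - prim_from_i f tau)%C = seg_int f tau w.
Proof.
  intros Ht Hw. pose proof (goursat Ci tau w ltac:(simpl; lra) Ht Hw) as G.
  unfold tri_int in G. rewrite (seg_int_swap f f_cont Ci w) in G by (simpl; lra || auto).
  change (prim_from_i f w) with (seg_int f Ci w).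
  change (prim_from_i f tau) with (seg_int f Ci tau).
  rewrite <- (Cplus_0_r (seg_int f Ci w - seg_int f Ci tau)), <- G. ring.
Qed.

Lemma is_derive_prim_from_i tau : 0 < Im tau ->
  @is_derive C_AbsRing C_NormedModule (prim_from_i f) tau (f tau).
Proof.
  intros Ht. apply deriv_at_is_derive. intros eps Heps.
  destruct (f_cont tau Ht eps Heps) as [del [Hdel Hf]].
  exists (Rmin del (Im tau)). split; [apply Rmin_pos; lra|]. intros w Hw.
  assert (Hw1 : Cmod (w - tau) < del) by (eapply Rlt_le_trans; [exact Hw|apply Rmin_l]).
  assert (HwH : 0 < Im w).
  { assert (Cmod (w - tau) < Im tau) by (eapply Rlt_le_trans; [exact Hw|apply Rmin_r]).
    pose proof (Im_le_Cmod (w - tau)) as HIm. apply Rabs_le_between in HIm.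
    replace (Im (w - tau)%C) with (Im w - Im tau) in HIm by (destruct w, tau; simpl; ring).
    lra. }
  rewrite prim_from_i_sub by auto.
  set (g := fun z => (f z - (f tau + RtoC 0 * z))%C).
  replace (seg_int f tau w - (w - tau) * f tau)%C with (seg_int g tau w).
  2:{ unfold g. rewrite seg_int_minus, seg_int_affine by auto using cont_on_H_affine.
      set (s := seg_int f tau w). set (u := f tau). ring_C. }
  rewrite Rmult_comm. apply Cmod_seg_int_le; auto.
  { apply cont_on_H_minus; auto using cont_on_H_affine. }
  intros t Htt. unfold g. set (pt := (tau + RtoC t * (w - tau))%C).
  replace (f pt - (f tau + RtoC 0 * pt))%C with (f pt - f tau)%C
    by (set (a1 := f pt); set (a2 := f tau); ring_C).
  left. apply Hf. replace (pt - tau)%C with (RtoC t * (w - tau))%C by (unfold pt; ring_C).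
  rewrite Cmod_RtoC_mult, Rabs_pos_eq by lra.
  pose proof (Cmod_ge_0 (w - tau)). nra.
Qed.

End HolomorphicOnH.

Lemma eq_of_derive_0_on_H (G : C -> C) :
  (forall z, 0 < Im z -> @is_derive C_AbsRing C_NormedModule G z (RtoC 0)) ->
  forall p q, 0 < Im p -> 0 < Im q -> G q = G p.
Proof.
  intros GD p q Hp Hq.
  set (d := (q - p)%C). pose proof (Cmod_ge_0 d).
  set (Psi := fun t : R => G (p + RtoC t * d)%C).
  assert (HD : forall t, 0 <= t <= 1 -> @is_derive R_AbsRing C_R_NormedModule Psi t (RtoC 0)).
  { intros t Htt. apply is_derive_R_C_of_eps. intros eps Heps.
    destruct (is_derive_deriv_at G _ _ (GD _ (seg_point_in_H p q t Hp Hq Htt))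
                (eps / (Cmod d + 1))) as [del [Hdel HG]]; [apply Rdiv_lt_0_compat; lra|].
    fold d in HG. exists (del / (Cmod d + 1)). split; [apply Rdiv_lt_0_compat; lra|]. intros s Hs.
    assert (Hm : Cmod (p + RtoC s * d - (p + RtoC t * d))%C = Rabs (s - t) * Cmod d).
    { replace (p + RtoC s * d - (p + RtoC t * d))%C with (RtoC (s - t) * d)%C by ring_C.
      apply Cmod_RtoC_mult. }
    pose proof (Rabs_pos (s - t)).
    apply Rmult_lt_compat_r with (r := Cmod d + 1) in Hs; [|lra].
    replace (del / (Cmod d + 1) * (Cmod d + 1)) with del in Hs by (field; lra).
    specialize (HG (p + RtoC s * d)%C ltac:(rewrite Hm; nra)). rewrite Hm in HG.
    unfold Psi. rewrite Cmult_0_r in *.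
    eapply Rle_trans; [exact HG|].
    replace (eps / (Cmod d + 1) * (Rabs (s - t) * Cmod d))
      with (eps * Rabs (s - t) * (Cmod d / (Cmod d + 1))) by (field; lra).
    assert (Cmod d / (Cmod d + 1) <= 1)
      by (apply Rmult_le_reg_r with (Cmod d + 1); [lra|]; field_simplify; lra).
    assert (0 <= eps * Rabs (s - t)) by nra. nra. }
  assert (HI : @is_RInt C_R_NormedModule (fun _ => RtoC 0) 0 1 (Psi 1 - Psi 0)%C).
  { apply (@is_RInt_derive C_R_CompleteNormedModule Psi).
    - intros x Hx. rewrite Rmin_left, Rmax_right in Hx by lra. apply HD; lra.
    - intros x _. apply continuous_const. }
  apply (@is_RInt_unique C_R_CompleteNormedModule) in HI.
  rewrite (@RInt_const C_R_CompleteNormedModule), scal_R_Cmult, Cmult_0_r in HI.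
  replace q with (p + RtoC 1 * d)%C by (unfold d; ring_C).
  replace p with (p + RtoC 0 * d)%C at 2 by ring_C.
  change (Psi 1 = Psi 0). rewrite <- (Cplus_0_r (Psi 0)), HI. ring.
Qed.

(** * Action of SL_2(Z) on the upper half-plane *)

Lemma det_IZR g : in_SL2Z g ->
  IZR (zmA g) * IZR (zmD g) - IZR (zmB g) * IZR (zmC g) = 1.
Proof. unfold in_SL2Z. intros H. now rewrite <- !mult_IZR, <- minus_IZR, H. Qed.

Lemma jfac_neq0 g tau : in_SL2Z g -> 0 < Im tau -> jfac g tau <> RtoC 0.
Proof.
  intros Hg Ht E. pose proof (det_IZR g Hg) as Hr.
  destruct g as [[[a b] c] d], tau as [x y]. unfold jfac in E. simpl in *.
  pose proof (f_equal fst E) as E1. pose proof (f_equal snd E) as E2. simpl in E1, E2.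
  assert (Hc : IZR c = 0) by nra. rewrite Hc in E1, Hr.
  assert (IZR d = 0) by lra. nra.
Qed.

Lemma Im_zmobius g tau : in_SL2Z g -> 0 < Im tau -> 0 < Im (zmobius g tau).
Proof.
  intros Hg Ht. pose proof (jfac_neq0 g tau Hg Ht) as Hj. pose proof (det_IZR g Hg) as Hr.
  destruct g as [[[a b] c] d], tau as [x y]. unfold jfac, zmobius in *. simpl in Ht, Hj, Hr.
  set (N := (IZR c * x + IZR d) ^ 2 + (IZR c * y) ^ 2).
  assert (HN : 0 < N).
  { unfold N. apply Rnot_le_lt. intros HN.
    pose proof (pow2_ge_0 (IZR c * x + IZR d)). pose proof (pow2_ge_0 (IZR c * y)).
    apply Hj, injective_projections; simpl; nra. }
  match goal with |- 0 < Im ?t =>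
    replace (Im t) with (y * (IZR a * IZR d - IZR b * IZR c) / N)
      by (simpl; unfold N; field; intros E; apply (Rlt_not_eq 0 N HN); rewrite <- E; unfold N; ring)
  end.
  rewrite Hr. apply Rdiv_lt_0_compat; lra.
Qed.

Lemma jfac_sub g tau w : jfac g w = (jfac g tau + RtoC (IZR (zmC g)) * (w - tau))%C.
Proof. unfold jfac. ring_C. Qed.

Lemma zmobius_sub g tau w : in_SL2Z g -> jfac g tau <> RtoC 0 -> jfac g w <> RtoC 0 ->
  (zmobius g w - zmobius g tau)%C = ((w - tau) / (jfac g w * jfac g tau))%C.
Proof.
  intros Hg Ht Hw.
  assert (Hdet : (RtoC (IZR (zmA g)) * RtoC (IZR (zmD g))
                  - RtoC (IZR (zmB g)) * RtoC (IZR (zmC g)))%C = RtoC 1)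
    by (rewrite <- !RtoC_mult, <- RtoC_minus, det_IZR; auto).
  destruct g as [[[a b] c] d]. unfold zmobius, jfac in *. cbn [zmA zmB zmC zmD] in *.
  set (A := RtoC (IZR a)) in *. set (B := RtoC (IZR b)) in *.
  set (Cc := RtoC (IZR c)) in *. set (D := RtoC (IZR d)) in *. clearbody A B Cc D.
  transitivity ((w - tau) * (A * D - B * Cc) / ((Cc * w + D) * (Cc * tau + D)))%C.
  - field; auto.
  - rewrite Hdet. field; auto.
Qed.

Lemma Cmod_jfac_ge g tau w :
  Cmod (RtoC (IZR (zmC g))) * Cmod (w - tau) <= Cmod (jfac g tau) / 2 ->
  Cmod (jfac g tau) / 2 <= Cmod (jfac g w).
Proof.
  intros H. rewrite (jfac_sub g tau w).
  set (u := (RtoC (IZR (zmC g)) * (w - tau))%C) in *.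
  pose proof (Cmod_triangle (jfac g tau + u) (- u)). rewrite Cmod_opp in H0.
  replace (jfac g tau + u + - u)%C with (jfac g tau) in H0 by ring.
  unfold u in *. rewrite Cmod_mult in *. lra.
Qed.

Lemma is_derive_zmobius g tau : in_SL2Z g -> 0 < Im tau ->
  @is_derive C_AbsRing (AbsRing_NormedModule C_AbsRing) (zmobius g) tau
    (/ (jfac g tau * jfac g tau))%C.
Proof.
  intros Hg Ht. pose proof (jfac_neq0 g tau Hg Ht) as Hj.
  apply deriv_at_is_derive_K. intros eps Heps.
  set (c := RtoC (IZR (zmC g))). set (K := Cmod (jfac g tau)). set (Cm := Cmod c).
  assert (HK : 0 < K) by (apply Cmod_gt_0; exact Hj).
  assert (HCm : 0 <= Cm) by apply Cmod_ge_0.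
  exists (Rmin (K / (2 * (Cm + 1))) (eps * (K * K * K) / (2 * (Cm + 1)))).
  split; [apply Rmin_pos; apply Rdiv_lt_0_compat; repeat apply Rmult_lt_0_compat; lra|].
  intros w Hw. pose proof (Cmod_ge_0 (w - tau)). set (r := Cmod (w - tau)) in *.
  assert (Hw1 : r * (2 * (Cm + 1)) < K).
  { apply Rlt_le_trans with (K / (2 * (Cm + 1)) * (2 * (Cm + 1))); [|right; field; lra].
    apply Rmult_lt_compat_r; [lra|]. eapply Rlt_le_trans; [exact Hw|apply Rmin_l]. }
  assert (Hw2 : r * (2 * (Cm + 1)) < eps * (K * K * K)).
  { apply Rlt_le_trans with (eps * (K * K * K) / (2 * (Cm + 1)) * (2 * (Cm + 1)));
      [|right; field; lra].
    apply Rmult_lt_compat_r; [lra|]. eapply Rlt_le_trans; [exact Hw|apply Rmin_r]. }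
  assert (HJw : K / 2 <= Cmod (jfac g w)) by (apply Cmod_jfac_ge; fold c Cm r K; nra).
  assert (HJw0 : jfac g w <> RtoC 0) by (intros E; rewrite E, Cmod_0 in HJw; lra).
  rewrite (zmobius_sub g tau w Hg Hj HJw0).
  replace ((w - tau) / (jfac g w * jfac g tau) - (w - tau) * / (jfac g tau * jfac g tau))%C
    with (- (c * ((w - tau) * (w - tau))) / (jfac g w * (jfac g tau * jfac g tau)))%C
    by (rewrite (jfac_sub g tau w); unfold c; field; rewrite <- jfac_sub; auto).
  rewrite Cmod_div by (repeat apply Cmult_neq_0; auto).
  rewrite Cmod_opp, !Cmod_mult. fold K Cm r.
  set (Jw := Cmod (jfac g w)) in *.
  assert (HJK : 0 < Jw * (K * K))
    by (apply Rmult_lt_0_compat; [lra|apply Rmult_lt_0_compat; lra]).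
  apply Rmult_le_reg_r with (Jw * (K * K)); [exact HJK|].
  replace (Cm * (r * r) / (Jw * (K * K)) * (Jw * (K * K))) with (Cm * (r * r)) by (field; split; lra).
  assert (0 <= eps * r * (K * K)) by (apply Rmult_le_pos; nra).
  nra.
Qed.

Lemma zmobius_zmul g h tau : in_SL2Z g -> in_SL2Z h -> 0 < Im tau ->
  zmobius (zmul g h) tau = zmobius g (zmobius h tau).
Proof.
  intros Hg Hh Ht.
  pose proof (jfac_neq0 h tau Hh Ht) as J1.
  pose proof (jfac_neq0 g (zmobius h tau) Hg (Im_zmobius h tau Hh Ht)) as J2.
  destruct g as [[[a b] c] d], h as [[[a' b'] c'] d'].
  unfold zmobius, zmul, jfac in *. cbn [zmA zmB zmC zmD] in *.
  rewrite !plus_IZR, !mult_IZR, !RtoC_plus, !RtoC_mult.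
  set (A := RtoC (IZR a)) in *. set (B := RtoC (IZR b)) in *.
  set (Cc := RtoC (IZR c)) in *. set (D := RtoC (IZR d)) in *.
  set (A' := RtoC (IZR a')) in *. set (B' := RtoC (IZR b')) in *.
  set (C' := RtoC (IZR c')) in *. set (D' := RtoC (IZR d')) in *.
  clearbody A B Cc D A' B' C' D'.
  assert (J3 : (Cc * (A' * tau + B') + D * (C' * tau + D'))%C <> RtoC 0).
  { intros E. apply J2.
    replace (Cc * ((A' * tau + B') / (C' * tau + D')) + D)%C
      with ((Cc * (A' * tau + B') + D * (C' * tau + D')) / (C' * tau + D'))%C by (field; auto).
    rewrite E. field. auto. }
  field. auto.
Qed.

(** * The primitive of a weight-two form *)

Lemma prim_from_i_Ci f : prim_from_i f Ci = RtoC 0.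
Proof.
  unfold prim_from_i.
  rewrite (@RInt_ext C_R_CompleteNormedModule _ (fun _ => RtoC 0))
    by (intros x _; set (u := f _); ring_C).
  rewrite (@RInt_const C_R_CompleteNormedModule), scal_R_Cmult. ring_C.
Qed.

Lemma prim_from_i_zmobius f g : (forall z, 0 < Im z -> ex_derive f z) -> in_SL2Z g ->
  (forall tau, 0 < Im tau -> f (zmobius g tau) = ((jfac g tau) ^ 2 * f tau)%C) ->
  forall tau, 0 < Im tau ->
    prim_from_i f (zmobius g tau) = (prim_from_i f tau + prim_from_i f (zmobius g Ci))%C.
Proof.
  intros Hd Hg Hmod tau Ht.
  set (G := fun z => (prim_from_i f (zmobius g z) - prim_from_i f z)%C).
  assert (GD : forall z, 0 < Im z -> @is_derive C_AbsRing C_NormedModule G z (RtoC 0)).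
  { intros z Hz. pose proof (jfac_neq0 g z Hg Hz) as Hj.
    pose proof (is_derive_minus _ _ z _ _
      (is_derive_comp (prim_from_i f) (zmobius g) z _ _
         (is_derive_prim_from_i f Hd (zmobius g z) (Im_zmobius g z Hg Hz))
         (is_derive_zmobius g z Hg Hz))
      (is_derive_prim_from_i f Hd z Hz)) as HG.
    replace (RtoC 0) with (@minus C_NormedModule
      (@scal C_AbsRing C_NormedModule (/ (jfac g z * jfac g z))%C (f (zmobius g z))) (f z));
      [exact HG|].
    change (/ (jfac g z * jfac g z) * f (zmobius g z) - f z = RtoC 0)%C.
    rewrite Hmod by auto. field. exact Hj. }
  pose proof (eq_of_derive_0_on_H G GD Ci tau ltac:(simpl; lra) Ht) as E.
  unfold G in E. rewrite prim_from_i_Ci in E.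
  transitivity (prim_from_i f (zmobius g tau) - prim_from_i f tau + prim_from_i f tau)%C;
    [ring|rewrite E; ring].
Qed.

Definition transl (c : C) : Cmat := (RtoC 1, c, RtoC 0, RtoC 1).

Lemma cdet_transl c : cdet (transl c) = RtoC 1.
Proof. unfold cdet, transl; simpl. ring_C. Qed.

Lemma cmul_transl c d : cmul (transl c) (transl d) = transl (c + d).
Proof. unfold cmul, transl; simpl. f_equal; [f_equal; [f_equal|]|]; ring_C. Qed.

Lemma cmobius_transl c z : cmobius (transl c) z = (z + c)%C.
Proof. unfold cmobius, transl; simpl. ring_C. Qed.

Theorem proposition4p1 (Gam : Zmat -> Prop) (f : C -> C) :
  is_subgroup_SL2Z Gam -> finite_index_SL2Z Gam ->
  modular_form_wt2 Gam f ->
  exists rho : Zmat -> Cmat,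
    is_rep Gam rho /\ is_triangular Gam rho /\
    equivariant Gam rho (prim_from_i f).
Proof.
  intros [HSL _] _ [Hholo [Hmod _]].
  set (c := fun g => prim_from_i f (zmobius g Ci)).
  assert (Hshift : forall g tau, Gam g -> 0 < Im tau ->
            prim_from_i f (zmobius g tau) = (prim_from_i f tau + c g)%C)
    by (intros; apply prim_from_i_zmobius; auto).
  exists (fun g => transl (c g)). split; [split|split].
  - intros g _. rewrite cdet_transl. exact C1_nz.
  - intros g h Hg Hh. rewrite cmul_transl, Cplus_comm. f_equal.
    unfold c at 1. rewrite zmobius_zmul by (auto; simpl; lra).
    apply Hshift; auto. apply Im_zmobius; auto. simpl; lra.
  - intros g _. reflexivity.
  - intros g tau Hg Ht. rewrite cmobius_transl. apply Hshift; auto.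
Qed.
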